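(* Let $X$ be a finite $T_0$-space and let $x_i\in X$ be a beat point (up or down). Then $\det(X_M)=-\det\big((X\setminus\{x_i\})_M\big)$.
   Context: A finite $T_0$-space is identified with a finite poset via $x\le y$ iff $U_x\subseteq U_y$, where $U_x$ is the minimal open set containing $x$; subspaces carry the induced order. For a labelling $X=\{x_1,\dots,x_n\}$, $X_M=(x_{i,j})$ is the $n\times n$ matrix with $x_{i,j}=0$ if $x_i\le x_j$ and $x_{i,j}=1$ otherwise; its determinant does not depend on the labelling. A point $x$ is a down beat point if $\{y: y<x\}$ has a maximum, and an up beat point if $\{y:y>x\}$ has a minimum. *)

From HB Require Import structures.
From mathcomp Require Import all_boot all_order all_algebra.
Set Implicit Arguments. Unset Strict Implicit. Unset Printing Implicit Defensive.
Import Order.TTheory GRing.Theory Num.Theory.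
Local Open Scope order_scope.

(* A finite T0-space is identified with a finite poset T (a finPOrderType).
   A subspace A : {set T} carries the induced order. *)
Definition posMx (d : Order.disp_t) (T : finPOrderType d) (A : {set T})
  : 'M[int]_#|A| :=
  \matrix_(i < #|A|, j < #|A|)
     (if (enum_val i <= enum_val j)%O then 0%R else 1%R).

Definition down_beat (d : Order.disp_t) (T : finPOrderType d) (A : {set T}) (x : T) :=
  exists2 m, m \in A & (m < x) /\ (forall y, y \in A -> y < x -> y <= m).

Definition up_beat (d : Order.disp_t) (T : finPOrderType d) (A : {set T}) (x : T) :=
  exists2 m, m \in A & (x < m) /\ (forall y, y \in A -> x < y -> m <= y).

Definition beat_point (d : Order.disp_t) (T : finPOrderType d) (x : T) :=
  down_beat [set: T] x \/ up_beat [set: T] x.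

From mathcomp Require Import all_boot all_order all_fingroup all_algebra.
Import Order.POrderTheory GRing.Theory.
Set Implicit Arguments. Unset Strict Implicit. Unset Printing Implicit Defensive.
Local Open Scope ring_scope.

(* If x is a down beat point and m = max {y | y < x}, then every y <> x lies
   below x exactly when it lies below m.  Hence in X_M, labelled with x first,
   the column of x is the column of m minus the first unit vector (x <= x but
   x is not <= m).  Subtracting the column of m, which does not change the
   determinant, leaves a unit vector in the first column, and expanding along
   it gives -det of the minor obtained by deleting x, i.e. -det((X\{x})_M).
   Up beat points are dual, with rows instead of columns. *)

Lemma det_row0_lift_sub_delta (R : comPzRingType) n (A : 'M[R]_n.+1) (r : 'I_n) :
  row 0 A = row (lift 0 r) A - delta_mx 0 0 ->
  \det A = - \det (row' 0 (col' 0 A)).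
Proof.
move=> rowA.
pose B := \matrix_(i, j) if i == 0 then A (lift 0 r) j else A i j.
pose C := \matrix_(i, j) if i == 0 then (j == 0)%:R else A i j : R.
have detB : \det B = 0.
  apply: (determinant_alternate (neq_lift 0 r)) => j.
  by rewrite !mxE eqxx eq_sym (negbTE (neq_lift _ _)).
have detC : \det C = \det (row' 0 (col' 0 A)).
  rewrite (expand_det_row C 0) (bigD1 0) //= big1 => [|j /negbTE j0]; last first.
    by rewrite !mxE eqxx j0 mul0r.
  rewrite addr0 !mxE !eqxx mul1r /cofactor addn0 expr0 mul1r.
  by congr (\det _); apply/matrixP => i j; rewrite !mxE eq_sym (negbTE (neq_lift _ _)).
rewrite (@determinant_multilinear _ _ A B C 0 1 (-1)).
- by rewrite detB detC mulr0 add0r mulN1r.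
- apply/rowP => j; move/rowP/(_ j): rowA.
  by rewrite !mxE !eqxx mul1r mulN1r => ->.
- by apply/matrixP => i j; rewrite !mxE eq_sym (negbTE (neq_lift _ _)).
- by apply/matrixP => i j; rewrite !mxE eq_sym (negbTE (neq_lift _ _)).
Qed.

Lemma det_col0_lift_sub_delta (R : comPzRingType) n (A : 'M[R]_n.+1) (r : 'I_n) :
  col 0 A = col (lift 0 r) A - delta_mx 0 0 ->
  \det A = - \det (row' 0 (col' 0 A)).
Proof.
move=> colA; rewrite -det_tr (det_row0_lift_sub_delta (r := r)).
  by rewrite -det_tr; congr (- \det _); apply/matrixP => i j; rewrite !mxE.
by rewrite -!tr_col colA linearB /= trmx_delta.
Qed.

Section OrderMatrix.
Variables (d : Order.disp_t) (T : finPOrderType d).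
Implicit Types (x m y : T) (A : {set T}).

Definition order_mx k (g : 'I_k -> T) : 'M[int]_k :=
  \matrix_(i, j) if (g i <= g j)%O then 0 else 1.

Lemma posMxE A : posMx A = order_mx enum_val.
Proof. by []. Qed.

Lemma det_order_mx_bij k l (g : 'I_k -> T) (h : 'I_l -> T) :
  bijective g -> bijective h -> \det (order_mx g) = \det (order_mx h).
Proof.
move=> gbij hbij; have e_kl : k = l.
  by rewrite -[k]card_ord -[l]card_ord (bij_eq_card gbij) (bij_eq_card hbij).
subst l; have [g' gK g'K] := gbij; have [h' hK h'K] := hbij.
have s_inj : injective (g' \o h).
  by move=> i j /= /(congr1 g); rewrite !g'K => /(can_inj hK).
pose s : 'S_k := perm s_inj.
have -> : order_mx h = row_perm s (col_perm s (order_mx g)).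
  by apply/matrixP => i j; rewrite !mxE !permE /= !g'K.
rewrite row_permE col_permE !det_mulmx !det_perm odd_permV.
by rewrite mulrCA -signr_addb addbb expr0 mulr1.
Qed.

Definition label_first x A : 'I_#|A|.+1 -> T :=
  fun i => if unlift 0 i is Some j then enum_val j else x.
Arguments label_first : clear implicits.

Lemma label_first0 x A : label_first x A 0 = x.
Proof. by rewrite /label_first unlift_none. Qed.

Lemma label_first_lift x A (j : 'I_#|A|) : label_first x A (lift 0 j) = enum_val j.
Proof. by rewrite /label_first liftK. Qed.

Lemma label_first_inj x A : x \notin A -> injective (label_first x A).
Proof.
move=> xA; have neq_x (j : 'I_#|A|) : enum_val j != x.
  by apply: contraNneq xA => <-; apply: enum_valP.
move=> i1 i2; case: (unliftP 0 i1) => [j1|] ->; case: (unliftP 0 i2) => [j2|] ->;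
  rewrite ?label_first0 ?label_first_lift //.
- by move/enum_val_inj ->.
- by move=> e; move: (neq_x j1); rewrite e eqxx.
- by move=> e; move: (neq_x j2); rewrite -e eqxx.
Qed.

Lemma label_firstC1_bij x : bijective (label_first x [set~ x]).
Proof.
apply: inj_card_bij; first by apply: label_first_inj; rewrite !inE eqxx.
by rewrite card_ord cardsC1 prednK //; apply/card_gt0P; exists x.
Qed.

Lemma order_mx_label_first_minor x A :
  row' 0 (col' 0 (order_mx (label_first x A))) = posMx A.
Proof. by apply/matrixP => i j; rewrite !mxE !label_first_lift. Qed.

Lemma down_beatP x :
  down_beat [set: T] x ->
  exists2 m, (m < x)%O & forall y, y != x -> (y <= x)%O = (y <= m)%O.
Proof.
case=> m _ [mx m_max]; exists m => // y yx.
apply/idP/idP => [yle | /le_lt_trans/(_ mx)/ltW //].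
by apply: m_max; rewrite ?inE // lt_neqAle yx.
Qed.

Lemma up_beatP x :
  up_beat [set: T] x ->
  exists2 m, (x < m)%O & forall y, y != x -> (x <= y)%O = (m <= y)%O.
Proof.
case=> m _ [xm m_min]; exists m => // y yx.
apply/idP/idP => [xle | /(lt_le_trans xm)/ltW //].
by apply: m_min; rewrite ?inE // lt_neqAle eq_sym yx.
Qed.

Lemma bij_lift_preimage k (g : 'I_k.+1 -> T) y :
  bijective g -> y != g 0 -> exists r, g (lift 0 r) = y.
Proof.
case=> g' gK g'K y0; case: (unliftP 0 (g' y)) => [r|] e.
  by exists r; rewrite -e g'K.
by move: y0; rewrite -e g'K eqxx.
Qed.

Lemma det_order_mx_beat k (g : 'I_k.+1 -> T) :
  bijective g -> beat_point (g 0) ->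
  \det (order_mx g) = - \det (row' 0 (col' 0 (order_mx g))).
Proof.
move=> gbij beat; have g_inj := bij_inj gbij.
have g_lift (i : 'I_k) : g (lift 0 i) != g 0 by rewrite (inj_eq g_inj) eq_sym neq_lift.
case: beat => [/down_beatP [m mx m_below] | /up_beatP [m xm m_above]].
- have [r gr] := bij_lift_preimage gbij (negbT (lt_eqF mx)).
  apply: (det_col0_lift_sub_delta (r := r)); apply/colP => i; rewrite !mxE gr.
  case: (unliftP 0 i) => [i'|] ->; last by rewrite eqxx lexx (lt_geF mx).
  by rewrite m_below ?g_lift // eq_sym (negbTE (neq_lift _ _)) subr0.
- have [r gr] := bij_lift_preimage gbij (negbT (gt_eqF xm)).
  apply: (det_row0_lift_sub_delta (r := r)); apply/rowP => j; rewrite !mxE gr.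
  case: (unliftP 0 j) => [j'|] ->; last by rewrite eqxx lexx (lt_geF xm).
  by rewrite m_above ?g_lift // eq_sym (negbTE (neq_lift _ _)) subr0.
Qed.

End OrderMatrix.

Theorem mainTheorem3 (d : Order.disp_t) (T : finPOrderType d) (x : T) :
  beat_point x ->
  \det (posMx [set: T]) = - \det (posMx [set~ x]).
Proof.
move=> beat; have f_bij := label_firstC1_bij x.
have enum_bij : bijective (@enum_val T (mem [set: T])).
  by apply: inj_card_bij; [apply: enum_val_inj | rewrite card_ord cardsT].
rewrite posMxE (det_order_mx_bij enum_bij f_bij) -(order_mx_label_first_minor x).
by apply: det_order_mx_beat; rewrite ?label_first0.
Qed.
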